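(* Let $\mathcal{M}\subset\mathbb{R}^d$ be a Riemannian manifold, let $\mathcal{Z}=\mathcal{Z}_1\times\dots\times\mathcal{Z}_s$ be a Cartesian product of finite nonempty sets, and let $\mathcal{E}$ be a finite nonempty set. Let $p_{(z,e)}$, $(z,e)\in\mathcal{Z}\times\mathcal{E}$, be non-negative scalars with $\sum_{e\in\mathcal{E}}p_{(z,e)}=1$ for each $z\in\mathcal{Z}$, and let $\{\mathbf{u}_{(z,e)}\mid(z,e)\in\mathcal{Z}\times\mathcal{E}\}\subset\mathcal{M}$ have weighted intrinsic mean $\mu$ with respect to the weights $w_{(z,e)}=p_{(z,e)}/\sum_{(z',e')}p_{(z',e')}$. For $z\in\mathcal{Z}$ put $\mathbf{v}_z=\sum_{e\in\mathcal{E}}p_{(z,e)}\mathrm{Log}_\mu(\mathbf{u}_{(z,e)})$ and $\mathbf{u}_z=\mathrm{Exp}_\mu(\mathbf{v}_z)$. Then the set $\{\mathbf{u}_z\}_{z\in\mathcal{Z}}$ has (unweighted) intrinsic mean $\mu$.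
   Context: $\mathcal{M}$ has intrinsic (geodesic) distance $d_\mathcal{M}$. For $\mu\in\mathcal{M}$, $T_\mu\mathcal{M}$ is the tangent space, $\mathrm{Exp}_\mu$ the exponential map and $\mathrm{Log}_\mu=\mathrm{Exp}_\mu^{-1}$ its (local) inverse. Given points $\mathbf{u}_1,\dots,\mathbf{u}_N\in\mathcal{M}$ and weights $w_i\ge0$ with $\sum_iw_i=1$, the weighted intrinsic mean is $\arg\min_{\mathbf{u}\in\mathcal{M}}\sum_iw_i\,d_\mathcal{M}(\mathbf{u},\mathbf{u}_i)^2$ (unweighted: $w_i=1/N$). Standing assumption of the paper: intrinsic means exist and are unique, the logarithmic map is defined at the relevant points, and a point $\mu$ is the (weighted) intrinsic mean of a set exactly when it satisfies the centering property $\sum_iw_i\,\mathrm{Log}_\mu(\mathbf{u}_i)=0$. *)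

From HB Require Import structures.
From mathcomp Require Import all_boot all_order all_algebra.
From mathcomp Require Import reals.
Set Implicit Arguments. Unset Strict Implicit. Unset Printing Implicit Defensive.
Import Order.TTheory GRing.Theory Num.Theory.
Local Open Scope ring_scope.

(* Abstract model of a Riemannian manifold M ⊂ R^d (no differential geometry
   library is available): M is a predicate on row vectors 'rV[R]_d, dist is
   the intrinsic distance d_M, T mu is a matrix whose row space is the tangent
   space T_mu M, Exp mu / Log mu are the exponential / logarithmic maps at mu. *)

Definition wobj {R : realType} {d : nat} (dist : 'rV[R]_d -> 'rV[R]_d -> R)
  (I : finType) (w : I -> R) (u : I -> 'rV[R]_d) (x : 'rV[R]_d) : R :=
  \sum_(i : I) w i * (dist x (u i)) ^+ 2.

Definition is_wmean {R : realType} {d : nat} (M : 'rV[R]_d -> Prop)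
  (dist : 'rV[R]_d -> 'rV[R]_d -> R)
  (I : finType) (w : I -> R) (u : I -> 'rV[R]_d) (mu : 'rV[R]_d) : Prop :=
  M mu /\
  (forall x, M x -> wobj dist w u mu <= wobj dist w u x) /\
  (forall x, M x -> wobj dist w u x <= wobj dist w u mu -> x = mu).

From HB Require Import structures.
From mathcomp Require Import all_boot all_order all_algebra.
From mathcomp Require Import reals.
Set Implicit Arguments. Unset Strict Implicit. Unset Printing Implicit Defensive.
Import Order.TTheory GRing.Theory Num.Theory.
Local Open Scope ring_scope.

(* With N = #|Z|, the row sums p z = 1 make the normalising constant of the
   weights on Z * E equal to N, so the centering property of mu for the points
   u (z, e) regroups as (1 / N) * sum_z v_z = 0.  Since Log_mu (u_z) = v_z,
   this is exactly the centering property of mu for the points u_z with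
   uniform weights 1 / N. *)

Lemma card_dffun_gt0 (I : finType) (T_ : I -> finType) :
  (forall i, 0 < #|T_ i|)%N -> (0 < #|{: {dffun forall i, T_ i}}|)%N.
Proof. by move=> T_gt0; rewrite card_dep_ffun foldrE big_map prodn_gt0. Qed.

Lemma sum_pair_row_stochastic (R : pzSemiRingType) (I J : finType)
    (p : I -> J -> R) :
  (forall i, \sum_(j : J) p i j = 1) ->
  \sum_(ij : I * J) p ij.1 ij.2 = #|{: I}|%:R.
Proof.
move=> p_row1; rewrite -(pair_bigA _ (fun i j => p i j)) /=.
by under eq_bigr do rewrite p_row1; rewrite sumr_const.
Qed.

Lemma sum_uniform_weights (F : numFieldType) (I : finType) :
  (0 < #|{: I}|)%N -> \sum_(i : I) (#|{: I}|%:R : F)^-1 = 1.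
Proof.
by move=> I_gt0; rewrite sumr_const -[LHS]mulr_natr mulVf // pnatr_eq0 -lt0n.
Qed.

Lemma sum_pair_scalerMr (R : comPzRingType) (V : lmodType R) (I J : finType)
    (p : I -> J -> R) (c : R) (f : I -> J -> V) :
  \sum_(ij : I * J) (p ij.1 ij.2 * c) *: f ij.1 ij.2
  = \sum_(i : I) c *: \sum_(j : J) p i j *: f i j.
Proof.
rewrite -(pair_bigA _ (fun i j => (p i j * c) *: f i j)) /=.
apply: eq_bigr => i _; rewrite scaler_sumr; apply: eq_bigr => j _.
by rewrite scalerA mulrC.
Qed.

Theorem lemma2 (R : realType) (d : nat)
  (M : 'rV[R]_d -> Prop) (dist : 'rV[R]_d -> 'rV[R]_d -> R)
  (T : 'rV[R]_d -> 'M[R]_d)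
  (Exp Log : 'rV[R]_d -> 'rV[R]_d -> 'rV[R]_d)
  (HExpM : forall mu v, M mu -> (v <= T mu)%MS -> M (Exp mu v))
  (HLogT : forall mu x, M mu -> M x -> (Log mu x <= T mu)%MS)
  (* standing assumption: (unique) weighted intrinsic mean <-> centering *)
  (Hcenter : forall (I : finType) (w : I -> R) (v : I -> 'rV[R]_d) (m : 'rV[R]_d),
      (forall i, 0 <= w i) -> \sum_(i : I) w i = 1 ->
      (forall i, M (v i)) -> M m ->
      (is_wmean M dist w v m <-> \sum_(i : I) w i *: Log m (v i) = 0))
  (s : nat) (Zs : 'I_s -> finType) (HZ : forall i, (0 < #|Zs i|)%N)
  (E : finType) (HE : (0 < #|E|)%N)
  (p : {dffun forall i : 'I_s, Zs i} -> E -> R)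
  (Hp0 : forall z e, 0 <= p z e)
  (Hp1 : forall z, \sum_(e : E) p z e = 1)
  (u : {dffun forall i : 'I_s, Zs i} -> E -> 'rV[R]_d)
  (Hu : forall z e, M (u z e))
  (mu : 'rV[R]_d)
  (Hmean : is_wmean M dist
             (fun ze : {dffun forall i : 'I_s, Zs i} * E =>
                p ze.1 ze.2 /
                \sum_(ze' : {dffun forall i : 'I_s, Zs i} * E) p ze'.1 ze'.2)
             (fun ze : {dffun forall i : 'I_s, Zs i} * E => u ze.1 ze.2) mu)
  (* standing assumption: Log_mu is defined at (is the local inverse of Exp_mu at) the relevant points *)
  (HLog : forall z : {dffun forall i : 'I_s, Zs i},
      Log mu (Exp mu (\sum_(e : E) p z e *: Log mu (u z e)))
      = \sum_(e : E) p z e *: Log mu (u z e)) :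
  is_wmean M dist
    (fun _ : {dffun forall i : 'I_s, Zs i} =>
       (#|{: {dffun forall i : 'I_s, Zs i}}|%:R)^-1)
    (fun z : {dffun forall i : 'I_s, Zs i} =>
       Exp mu (\sum_(e : E) p z e *: Log mu (u z e)))
    mu.
Proof.
set Z := ({dffun forall i : 'I_s, Zs i}).
have [M_mu _] := Hmean.
have Z_gt0 : (0 < #|{: Z}|)%N := card_dffun_gt0 HZ.
have N_neq0 : (#|{: Z}|%:R : R) != 0 by rewrite pnatr_eq0 -lt0n.
rewrite (sum_pair_row_stochastic Hp1) in Hmean.
have pairs_centered :
    \sum_(ze : Z * E) (p ze.1 ze.2 / #|{: Z}|%:R) *: Log mu (u ze.1 ze.2) = 0.
  apply/(Hcenter _ _ (fun ze : Z * E => u ze.1 ze.2)) => //.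
  - by move=> ze; rewrite divr_ge0 ?ler0n.
  - by rewrite -mulr_suml (sum_pair_row_stochastic Hp1) mulfV.
apply/Hcenter => //.
- by move=> _; rewrite invr_ge0 ler0n.
- exact: sum_uniform_weights.
- move=> z; apply: HExpM => //.
  by apply: summx_sub => e _; apply/scalemx_sub/HLogT.
under eq_bigr do rewrite HLog.
by rewrite -sum_pair_scalerMr.
Qed.
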